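(* Let $n\ge1$. The Chabauty space $\mathcal{C}(\mathbf{Z}\times\mathbf{Z}/n\mathbf{Z})$ is homeomorphic to $\overline{\mathbf{N}}\times[d(n)]$, the accumulation points corresponding to the subgroups $\{0\}\times\langle m\rangle$, with $m$ a positive divisor of $n$.
   Context: For a discrete group $G$, $\mathcal{C}(G)$ is the set of subgroups of $G$ with the Chabauty topology (the topology induced by the product topology on $\{0,1\}^G$). $\overline{\mathbf{N}}=\mathbf{N}\cup\{\infty\}$ is the one-point compactification of $\mathbf{N}$, $[k]=\{1,\dots,k\}$ (discrete), $d(n)$ is the number of positive divisors of $n$, and $\langle m\rangle$ is the subgroup of $\mathbf{Z}/n\mathbf{Z}$ generated by the class of $m$. *)

From HB Require Import structures.
From mathcomp Require Import all_boot all_order all_algebra.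
From mathcomp Require Import all_classical all_reals all_analysis.
Unset Printing Implicit Defensive.
Import Order.TTheory GRing.Theory Num.Theory.
Local Open Scope classical_set_scope.
Local Open Scope ring_scope.

(* Z/nZ for n >= 1: 'I_n.-1.+1 is 'I_n (when n >= 1), with its canonical
   zmodType structure (addition mod n) from zmodp. *)
Definition Zmod (n : nat) : finZmodType := 'I_n.-1.+1.

Definition ZxZn (n : nat) : zmodType := (int * Zmod n)%type.

Definition is_subgroup (G : zmodType) (H : G -> bool) : Prop :=
  H 0 /\ (forall x y, H x -> H y -> H (x - y)).

(* The Chabauty space C(G): the set of subgroups of G inside {0,1}^G with the
   product topology (topology of pointwise convergence). *)
Definition Chabauty (G : zmodType) : set {ptws G -> bool} :=
  [set H | @is_subgroup G H].

Definition homeomorphic_to {T U : topologicalType} (A : set T) : Prop :=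
  exists (f : T -> U) (g : U -> T),
    [/\ {within A, continuous f}, continuous g,
        (forall x, A x -> g (f x) = x) &
        (forall y, A (g y) /\ f (g y) = y)].

(* \bar N = N u {oo}, the one-point compactification of the discrete N
   (None plays the role of oo). *)
Definition Nbar : topologicalType := one_point_compactification nat.

(* [k] = {1,...,k} with the discrete topology (indexed here as 'I_k). *)
Definition Kset (k : nat) : topologicalType := discrete_topology 'I_k.

Definition ndiv (n : nat) : nat := size (divisors n).

Definition cyc_gen (n m : nat) (b : Zmod n) : bool :=
  `[< exists k : nat, b = (@inZp n.-1 m : Zmod n) *+ k >].

Definition zero_times_cyc (n m : nat) : {ptws ZxZn n -> bool} :=
  fun x => (x.1 == 0) && @cyc_gen n m x.2.

(** Every subgroup H of Z x Z/N is generated by two elements (k, a) and (0, m):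
    kZ is the projection of H to Z, the fibre of H over 0 is generated by m, a
    divisor of N, and (k, a) is any point of H above k.  The subgroup determines
    m, k and, when k > 0, the residue of a mod m.  Encoding the pairs (k, a) with
    k > 0 and a < m by j = (k - 1) m + a, and k = 0 by oo, gives a bijection from
    Nbar x {divisors of N} onto the Chabauty space.  It is continuous: with m
    fixed, as j -> oo the subgroup agrees with {0} x <m> on the growing windows
    |z| < k.  A continuous bijection from a compact space onto a Hausdorff space
    is a homeomorphism, so the accumulation points are the images of the points
    (oo, m), i.e. the subgroups {0} x <m>. *)

From HB Require Import structures.
From mathcomp Require Import all_boot all_order all_algebra.
From mathcomp Require Import all_classical all_reals all_analysis.
Import Order.TTheory GRing.Theory Num.Theory.
Local Open Scope classical_set_scope.
Local Open Scope ring_scope.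
Set Implicit Arguments.
Unset Strict Implicit.

Section SubgroupClosure.
Variables (G : zmodType) (H : G -> bool).
Hypothesis subH : is_subgroup G H.

Lemma subgroup0 : H 0. Proof. by case: subH. Qed.

Lemma subgroupB x y : H x -> H y -> H (x - y).
Proof. by case: subH => _; apply. Qed.

Lemma subgroupN x : H x -> H (- x).
Proof. by move=> Hx; rewrite -sub0r subgroupB ?subgroup0. Qed.

Lemma subgroupD x y : H x -> H y -> H (x + y).
Proof. by move=> Hx Hy; rewrite -[y]opprK subgroupB ?subgroupN. Qed.

Lemma subgroupMz x q : H x -> H (x *~ q).
Proof.
move=> Hx; have HMn k : H (x *+ k).
  by elim: k => [|k IHk]; rewrite ?mulr0n ?subgroup0 // mulrS subgroupD.
case: q => k; first exact: HMn.
by rewrite NegzE mulrNz; apply/subgroupN/HMn.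
Qed.

End SubgroupClosure.

Lemma subgroup_preim (U V : zmodType) (f : U -> V) (S : V -> bool) :
  {morph f : x y / x - y} -> is_subgroup V S -> is_subgroup U (S \o f).
Proof.
move=> fB subS; have f0 : f 0 = 0 by rewrite -(subrr 0) fB subrr.
by split=> [|x y Sx Sy] /=; rewrite ?f0 ?fB ?subgroup0 ?subgroupB.
Qed.

Lemma subgroup_intP (S : int -> bool) :
  is_subgroup int S -> exists k : nat, forall z, S z = (k%:Z %| z)%Z.
Proof.
move=> subS.
have S_abs z : S z -> S `|z|%N%:Z.
  by case: z => t St //; rewrite NegzE -[_.+1%:Z]opprK subgroupN.
pose P t := (0 < t)%N && S t%:Z.
have [exP | S0] := pselect (exists t, P t); last first.
  exists 0%N => z; rewrite dvd0z; apply/idP/eqP => [Sz | ->]; last exact: subgroup0.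
  apply/eqP; apply: contraT => z_neq0.
  by case: S0; exists `|z|%N; rewrite /P absz_gt0 z_neq0 S_abs.
case: (ex_minnP exP) => k /andP[k_gt0 Sk] k_min.
exists k => z; apply/idP/idP => [Sz | /dvdzP[q ->]]; last first.
  by rewrite mulrC -mulrzz subgroupMz.
have k_neq0 : k%:Z != 0 by rewrite eqz_nat -lt0n.
have Smod : S (z %% k%:Z)%Z.
  by rewrite /modz mulrC -mulrzz subgroupB ?subgroupMz.
apply/dvdz_mod0P; move: Smod (modz_ge0 z k_neq0) (ltz_pmod z (k_gt0 : 0 < k%:Z)).
case: (z %% k%:Z)%Z => // -[// | r] Sr _.
by rewrite ltz_nat ltnNge (k_min r.+1 Sr).
Qed.

Lemma pairD (U V : zmodType) (x1 y1 : U) (x2 y2 : V) :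
  (x1, x2) + (y1, y2) = (x1 + y1, x2 + y2).
Proof. by []. Qed.

Lemma pairB (U V : zmodType) (x1 y1 : U) (x2 y2 : V) :
  (x1, x2) - (y1, y2) = (x1 - y1, x2 - y2).
Proof. by []. Qed.

Lemma pair_mulrz (U V : zmodType) (x : U * V) q : x *~ q = (x.1 *~ q, x.2 *~ q).
Proof. by rewrite -[x.1 *~ q]raddfMz -[x.2 *~ q]raddfMz; case: (x *~ q). Qed.

Section ZpDivisors.
Variables (p' m : nat).
Local Notation N := p'.+1.
Hypothesis m_dvd_N : (m %| N)%N.

Lemma Zp_add_modn (x y : 'I_N) : val (x + y) = (x + y)%N %[mod m].
Proof. exact: modn_dvdm. Qed.

Lemma dvdn_Zp_sub (x y : 'I_N) : (m %| val (x - y)%R)%N = (x == y %[mod m]).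
Proof.
have -> : x = (val (x - y)%R + y)%N %[mod m] by rewrite -Zp_add_modn subrK.
by rewrite eqn_mod_dvd ?leq_addl // addnK.
Qed.

Lemma subgroup_dvdn : is_subgroup 'I_N (fun b => m %| b)%N.
Proof.
split=> [|x y mx my]; first exact: dvdn0.
by rewrite dvdn_Zp_sub; apply/eqP; rewrite (eqP mx) (eqP my).
Qed.

Lemma cyc_genE (b : 'I_N) : cyc_gen N m b = (m %| b)%N.
Proof.
apply/asboolP/idP => [[k ->] | /dvdnP[k b_eq]].
  by rewrite Zp_mulrn /= modnMml /dvdn modn_dvdm // modnMr.
by exists k; apply: val_inj; rewrite Zp_mulrn /= modnMml mulnC -b_eq modn_small.
Qed.

End ZpDivisors.

Lemma dvdn_Zp_inj p' (m m' : nat) : (0 < m)%N -> (0 < m')%N ->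
  (m %| p'.+1)%N -> (m' %| p'.+1)%N ->
  (forall b : 'I_p'.+1, (m %| b)%N = (m' %| b)%N) -> m = m'.
Proof.
wlog le_mm' : m m' / (m <= m')%N => [wlog_le | m_gt0 m'_gt0 mN m'N eq_dvd].
  by case: (leqP m m') => [|/ltnW] le ? ? ? ? eq_dvd; [|apply/esym];
     apply: wlog_le => // b; rewrite eq_dvd.
apply/eqP; rewrite eqn_leq le_mm' /=.
have [m_lt | N_le] := ltnP m p'.+1; last exact: leq_trans (dvdn_leq _ m'N) N_le.
apply: dvdn_leq m_gt0 _; have := eq_dvd (inZp m); rewrite /= modn_small // => <-.
exact: dvdnn.
Qed.

Section SubgroupsOfZxZp.
Variable p' : nat.
Local Notation N := p'.+1.
Local Notation G := (int * 'I_N)%type.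

(* The subgroup generated by (k, a) and (0, m), for m dividing N; when k = 0,
   [x.1 %/ 0 = 0] and it is {0} x <m>. *)
Definition subgroup_gen (k m : nat) (a : 'I_N) : {ptws G -> bool} :=
  fun x => (k%:Z %| x.1)%Z && (m %| (x.2 - a *~ (x.1 %/ k%:Z)%Z)%R)%N.

Lemma subgroup_gen0E m a z b :
  subgroup_gen 0 m a (z, b) = (z == 0) && (m %| b)%N.
Proof. by rewrite /subgroup_gen; cbn [fst snd]; rewrite dvd0z divz0 mulr0z subr0. Qed.

Lemma subgroup_gen_fiber k m a b : subgroup_gen k m a (0, b) = (m %| b)%N.
Proof. by rewrite /subgroup_gen; cbn [fst snd]; rewrite dvdz0 div0z mulr0z subr0. Qed.

Lemma subgroup_gen_mulz k m a q b : (0 < k)%N ->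
  subgroup_gen k m a (q * k%:Z, b) = (m %| (b - a *~ q)%R)%N.
Proof.
move=> k_gt0; rewrite /subgroup_gen; cbn [fst snd].
by rewrite dvdz_mull // mulzK // eqz_nat -lt0n.
Qed.

Lemma subgroup_genP k m (a : 'I_N) z b : (0 < k)%N ->
  reflect (exists2 q, z = q * k%:Z & (m %| (b - a *~ q)%R)%N)
          (subgroup_gen k m a (z, b)).
Proof.
move=> k_gt0; apply: (iffP idP) => [zb | [q -> mb]]; last by rewrite subgroup_gen_mulz.
have /dvdzP[q z_eq] := proj1 (andP zb).
by exists q; rewrite // -(subgroup_gen_mulz _ _ _ _ k_gt0) -z_eq.
Qed.

Lemma subgroup_gen_self k m a : (0 < k)%N -> subgroup_gen k m a (k%:Z, a).
Proof. by move=> k_gt0; apply/subgroup_genP => //; exists 1; rewrite ?mul1r // subrr. Qed.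

Lemma subgroup_gen_near0 k m a z b : (`|z| < k)%N ->
  subgroup_gen k m a (z, b) = subgroup_gen 0 m 0 (z, b).
Proof.
have [-> _ | z_neq0 z_lt] := eqVneq z 0; first by rewrite !subgroup_gen_fiber.
rewrite subgroup_gen0E (negbTE z_neq0) /subgroup_gen; cbn [fst snd].
suff -> : (k%:Z %| z)%Z = false by [].
apply/negbTE/negP => /dvdzP[q z_eq]; move: z_neq0 z_lt.
rewrite z_eq mulf_eq0 negb_or abszM /= ltnNge => /andP[q_neq0 _].
by rewrite leq_pmull // absz_gt0.
Qed.

Lemma subgroup_gen_is_subgroup k m a : (m %| N)%N -> is_subgroup G (subgroup_gen k m a).
Proof.
move=> mN; have subm := subgroup_dvdn mN.
split=> [|[z1 b1] [z2 b2]]; first by rewrite subgroup_gen_fiber dvdn0.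
have [->|k_gt0] := posnP k.
  rewrite !subgroup_gen0E => /andP[/eqP-> mb1] /andP[/eqP-> mb2].
  by apply/andP; split; [|exact: (subgroupB subm mb1 mb2)].
move=> /subgroup_genP-/(_ k_gt0)[q1 -> mb1] /subgroup_genP-/(_ k_gt0)[q2 -> mb2].
rewrite (_ : _ - _ = ((q1 - q2) * k%:Z, b1 - b2) :> G); last by rewrite mulrBl.
rewrite subgroup_gen_mulz // (_ : _ - _ = (b1 - a *~ q1) - (b2 - a *~ q2)).
  exact: (subgroupB subm mb1 mb2).
rewrite mulrzBr !opprB addrACA [RHS]addrACA; congr (_ + _); exact: addrC.
Qed.

Lemma Zp1_mulrz_val (b : 'I_N) : Zp1 *~ (b : nat)%:Z = b.
Proof. by apply: val_inj; rewrite -pmulrn Zp_mulrn /= modnMml mul1n modn_small. Qed.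

Lemma subgroup_classification (H : G -> bool) : is_subgroup G H ->
  exists k m a, [/\ (0 < m)%N, (m %| N)%N & H = subgroup_gen k m a].
Proof.
move=> subH.
(* The fibre over 0, read through t |-> (0, t * 1), is a subgroup of Z. *)
have [m fiberE] : exists m : nat, forall t, H (0, Zp1 *~ t) = (m%:Z %| t)%Z.
  apply: subgroup_intP; apply: (subgroup_preim (f := fun t => (0, Zp1 *~ t))) => //.
  by move=> x y; rewrite mulrzBr.
have fiber (b : 'I_N) : H (0, b) = (m %| b)%N.
  by rewrite -{1}(Zp1_mulrz_val b) fiberE dvdzE.
have m_dvd_N : (m %| N)%N.
  have N0 : Zp1 *~ N = 0 :> 'I_N.
    by apply: val_inj; rewrite -pmulrn Zp_mulrn /= modnMml mul1n modnn.
  by have := fiberE N; rewrite N0 (subgroup0 subH) => /esym.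
have m_gt0 : (0 < m)%N by case: m m_dvd_N {fiberE fiber} => // /dvd0n.
have [k projE] : exists k : nat, forall z, [exists b, H (z, b)] = (k%:Z %| z)%Z.
  apply: subgroup_intP; split=> [|x y /existsP[b1 H1] /existsP[b2 H2]].
    by apply/existsP; exists 0; apply: (subgroup0 subH).
  by apply/existsP; exists (b1 - b2); apply: (subgroupB subH H1 H2).
have [a Hka] : exists a, H (k%:Z, a) by apply/existsP; rewrite projE.
exists k, m, a; split => //; apply/funext => -[z b].
have [k0 | k_gt0] := posnP k.
  move: projE; rewrite k0 subgroup_gen0E => projE.
  apply/idP/andP => [Hzb | [/eqP-> mb]]; last by rewrite fiber.
  have /eqP z0 : z == 0 by rewrite -dvd0z -projE; apply/existsP; exists b.
  by move: Hzb; rewrite z0 fiber.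
have mulk q : (k%:Z, a) *~ q = (q * k%:Z, a *~ q) by rewrite pair_mulrz mulrzz mulrC.
apply/idP/(subgroup_genP _ _ _ _ k_gt0) => [Hzb | [q -> mb]].
  have /dvdzP[q z_eq] : (k%:Z %| z)%Z by rewrite -projE; apply/existsP; exists b.
  exists q => //; rewrite -fiber (_ : (0, _) = (z, b) - (k%:Z, a) *~ q).
    by apply: (subgroupB subH); rewrite ?(subgroupMz subH).
  by rewrite mulk z_eq pairB subrr.
rewrite (_ : (_, b) = (0, b - a *~ q) + (k%:Z, a) *~ q).
  by apply: (subgroupD subH); rewrite ?fiber ?(subgroupMz subH).
by rewrite mulk pairD add0r subrK.
Qed.

Lemma subgroup_gen_inj_k k k' m m' (a a' : 'I_N) :
  subgroup_gen k m a = subgroup_gen k' m' a' -> k = k'.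
Proof.
suff dvd_k k1 k2 m1 m2 (a1 a2 : 'I_N) :
    subgroup_gen k1 m1 a1 = subgroup_gen k2 m2 a2 -> (k2 %| k1)%N.
  move=> e; apply/eqP.
  by rewrite eqn_dvd (dvd_k _ _ _ _ _ _ e) (dvd_k _ _ _ _ _ _ (esym e)).
have [-> // | k1_gt0] := posnP k1; move=> e.
by have := subgroup_gen_self m1 a1 k1_gt0; rewrite e => /andP[]; rewrite dvdzE.
Qed.

Lemma subgroup_gen_dvdn_sub k m (a a' : 'I_N) : (0 < k)%N ->
  subgroup_gen k m a = subgroup_gen k m a' -> (m %| (a - a')%R)%N.
Proof.
move=> k_gt0 e; have := subgroup_gen_self m a k_gt0.
by rewrite -[k%:Z]mul1r e subgroup_gen_mulz.
Qed.

Lemma subgroup_gen_congr k m (a a' : 'I_N) : (m %| N)%N ->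
  (m %| (a - a')%R)%N -> subgroup_gen k m a = subgroup_gen k m a'.
Proof.
move=> mN maa'; have subm := subgroup_dvdn mN.
apply/funext => -[z b]; have [-> | k_gt0] := posnP k; first by rewrite !subgroup_gen0E.
have shift q : b - a' *~ q = (b - a *~ q) + (a - a') *~ q.
  by rewrite mulrzBl addrA subrK.
apply/(subgroup_genP _ _ _ _ k_gt0)/(subgroup_genP _ _ _ _ k_gt0) => -[q -> mb].
  by exists q; rewrite // shift; exact: (subgroupD subm mb (subgroupMz subm q maa')).
exists q => //; rewrite (_ : b - a *~ q = (b - a' *~ q) - (a - a') *~ q).
  exact: (subgroupB subm mb (subgroupMz subm q maa')).
by rewrite shift addrK.
Qed.

End SubgroupsOfZxZp.

Section Parametrisation.
Variable p' : nat.
Local Notation N := p'.+1.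
Local Notation T := (Nbar * Kset (ndiv N))%type.

Definition divisor_at (i : 'I_(ndiv N)) : nat := nth 0%N (divisors N) i.

Lemma divisor_at_dvd i : (divisor_at i %| N)%N.
Proof. by rewrite dvdn_divisors // mem_nth. Qed.

Lemma divisor_at_gt0 i : (0 < divisor_at i)%N.
Proof. exact: dvdn_gt0 (divisor_at_dvd i). Qed.

Lemma divisor_at_inj : injective divisor_at.
Proof. by move=> i j /eqP; rewrite nth_uniq ?divisors_uniq // => /eqP/val_inj. Qed.

Lemma divisor_atP m : (m %| N)%N -> exists i, divisor_at i = m.
Proof.
rewrite dvdn_divisors // -index_mem => m_idx.
by exists (Ordinal m_idx); rewrite /divisor_at nth_index // -index_mem.
Qed.

(* [Some j] stands for k = j %/ m + 1 and a = j %% m, [None] for k = 0. *)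
Definition param (y : T) : {ptws ZxZn N -> bool} :=
  match y with
  | (Some j, i) => let m := divisor_at i in subgroup_gen (j %/ m).+1 m (inZp (j %% m))
  | (None, i) => subgroup_gen 0 (divisor_at i) 0
  end.

Lemma param_fiber y b : param y (0, b) = (divisor_at y.2 %| b)%N.
Proof. by case: y => -[j|] i; rewrite /= subgroup_gen_fiber. Qed.

Lemma param_None i : param (None, i) = zero_times_cyc N (divisor_at i).
Proof.
apply/funext => -[z b].
by rewrite /= subgroup_gen0E /zero_times_cyc cyc_genE ?divisor_at_dvd.
Qed.

Lemma param_subgroup y : Chabauty (ZxZn N) (param y).
Proof. by case: y => -[j|] i; apply: subgroup_gen_is_subgroup; apply: divisor_at_dvd. Qed.

Lemma param_surj H : Chabauty (ZxZn N) H -> exists y, param y = H.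
Proof.
move=> /subgroup_classification[k [m [a [m_gt0 mN ->]]]].
have [i <-] := divisor_atP mN; set m' := divisor_at i.
have [-> | k_gt0] := posnP k.
  by exists (None, i); apply/funext => -[z b]; rewrite /= !subgroup_gen0E.
have m'_gt0 := divisor_at_gt0 i.
exists (Some (k.-1 * m' + a %% m')%N, i); rewrite /= -/m'.
rewrite divnMDl // divn_small ?ltn_pmod // addn0 prednK // modnMDl modn_mod.
apply: subgroup_gen_congr; first exact: divisor_at_dvd.
by rewrite dvdn_Zp_sub ?divisor_at_dvd //= modn_dvdm ?divisor_at_dvd // !modn_mod.
Qed.

Lemma param_inj : injective param.
Proof.
move=> [oj i] [oj' i'] e.
have i_eq : i = i'.
  apply: divisor_at_inj; apply: (@dvdn_Zp_inj p'); rewrite ?divisor_at_gt0 ?divisor_at_dvd // => b.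
  by rewrite -(param_fiber (oj, i) b) e param_fiber.
subst i'; case: oj oj' e => [j|] [j'|] e; move: (e) => /subgroup_gen_inj_k //= k_eq.
congr (Some _, _); set m := divisor_at i in e k_eq.
move: e; rewrite /= -/m -k_eq => /(subgroup_gen_dvdn_sub (ltn0Sn _)).
rewrite dvdn_Zp_sub ?divisor_at_dvd //= !modn_dvdm ?divisor_at_dvd ?dvdnn // => /eqP r_eq.
by rewrite (divn_eq j m) (divn_eq j' m) r_eq; case: k_eq => ->.
Qed.

End Parametrisation.

Section CompactEmbedding.
Context {X Y : topologicalType} (f : X -> Y) (g : Y -> X).
Hypotheses (f_cont : continuous f) (fK : cancel f g).

Lemma compact_cancel_continuous : compact [set: X] -> hausdorff_space Y ->
  {within range f, continuous g}.
Proof.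
move=> X_compact Y_hausdorff; apply/subspace_continuousP => _ [x _ <-] U.
rewrite /from_subspace fK nbhsE => -[V [V_open Vx] VU].
have C_closed : closed (f @` ~` V).
  apply: compact_closed => //; apply: continuous_compact.
    exact: continuous_subspaceT.
  by apply: subclosed_compact X_compact _ => //; rewrite closedC.
have fx_notC : ~ (f @` ~` V) (f x).
  by case=> y nVy /(can_inj fK) yx; apply: nVy; rewrite yx.
have : nbhs (f x) (~` (f @` ~` V)).
  by apply: open_nbhs_nbhs; split => //; exact: closed_openC.
apply: filterS => z nC [y _ fy]; rewrite /= -fy fK; apply: VU.
by apply: contrapT => nVy; apply: nC; exists y.
Qed.

Lemma limit_point_range (g_cont : {within range f, continuous g}) x :
  limit_point (range f) (f x) <-> limit_point [set: X] x.
Proof.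
split=> [fx_lim U Ux | x_lim W Wfx].
  have /subspace_continuousP/(_ (f x) (imageT f x)) := g_cont.
  rewrite /from_subspace fK => gx.
  have [z [zfx [y _ yz] /(_ (ex_intro2 _ _ y I yz))]] := fx_lim _ (gx U Ux).
  move: zfx; rewrite -yz /= fK => fyx Uy.
  by exists y; split=> //; apply: contra_neq fyx => ->.
have [y [yx _ Wfy]] := x_lim _ (f_cont Wfx).
exists (f y); split; [by apply: contra_neq yx => /(can_inj fK) | exact: imageT | exact: Wfy].
Qed.

End CompactEmbedding.

Lemma ptws_cvg_bool (X : choiceType) (S : topologicalType) (F : S -> {ptws X -> bool}) s :
  (forall x, \forall t \near s, F t x = F s x) -> F @ s --> F s.
Proof.
move=> near_eq; apply/(@pointwise_cvgP (discrete_topology X) bool) => x.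
exact/discrete_cvg/near_eq.
Qed.

Lemma compact_nat_bounded (C : set nat) : compact C -> exists K, forall j, C j -> (j < K)%N.
Proof.
rewrite compact_cover => /(_ nat setT (fun K => `I_K)) [].
- by move=> K _; exact: discrete_open.
- by move=> j _; exists j.+1 => //=; rewrite /= ltnSn.
move=> D _ C_cover; exists (\max_(K <- finmap.enum_fset D) K)%N => j /C_cover[K KD jK].
exact: leq_trans jK (@leq_bigmax_seq nat _ xpredT id K KD isT).
Qed.

Lemma nbhs_Some (j : nat) : nbhs (Some j : Nbar) [set Some j].
Proof.
rewrite -image_set1; apply: one_point_compactification_some_nbhs.
exact: discrete_set1.
Qed.

Lemma nbhs_None (U : set Nbar) :
  nbhs (None : Nbar) U -> exists K, forall j, (K <= j)%N -> U (Some j).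
Proof.
case=> C [/compact_nat_bounded[K CK] _] CU; exists K => j Kj.
by apply: CU; left; exists j => // /CK; rewrite ltnNge Kj.
Qed.

Lemma nbhs_None_tail K :
  nbhs (None : Nbar) [set y | if y is Some j then (K <= j)%N else true].
Proof.
exists `I_K; first by split; [exact: finite_compact (finite_II K) | exact: discrete_closed].
by move=> [j|] // [[j' jK [<-]] |] //=; rewrite leqNgt; apply/negP.
Qed.

Lemma nbhs_Some_pair k j (i : Kset k) :
  nbhs ((Some j, i) : Nbar * Kset k) [set (Some j, i)].
Proof.
exists ([set Some j], [set i]); first by split; [exact: nbhs_Some | exact: discrete_set1].
by move=> [y1 y2] [/= -> ->].
Qed.

Lemma limit_point_NbarE k (y : Nbar * Kset k) :
  limit_point [set: Nbar * Kset k] y <-> y.1 = None.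
Proof.
case: y => -[j|] i /=; split => //.
  move=> /(_ [set (Some j, i)]) [|y [+ _ yp]]; last by rewrite yp eqxx.
  exact: nbhs_Some_pair.
move=> _ W [[A B] [/nbhs_None[K AK] /nbhs_singleton Bi] ABW].
by exists (Some K, i); split => //; apply: ABW; split => //; exact: AK.
Qed.

Lemma compact_Nbar_Kset k : compact [set: Nbar * Kset k].
Proof.
rewrite -setXTT; apply: compact_setX; first exact: one_point_compactification_compact.
by apply: finite_compact; exact: (@finite_finset 'I_k setT).
Qed.

Section ParamTopology.
Variable p' : nat.
Local Notation N := p'.+1.
Local Notation T := (Nbar * Kset (ndiv N))%type.

Lemma param_continuous : continuous (@param p').
Proof.
move=> [[j|] i].
  move=> W /nbhs_singleton Wp; apply: filterS (nbhs_Some_pair j i) => _ -> //.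
apply: ptws_cvg_bool => -[z b]; set m := divisor_at i.
exists ([set y | if y is Some j then (`|z| * m <= j)%N else true], [set i]).
  by split; [exact: nbhs_None_tail | exact: discrete_set1].
move=> [[j|] _] [/= zj ->] //=.
by rewrite subgroup_gen_near0 // ltnS leq_divRL // divisor_at_gt0.
Qed.

Lemma range_param : range (@param p') = Chabauty (ZxZn N).
Proof.
apply/seteqP; split=> [_ [y _ <-] | H /param_surj[y yH]]; first exact: param_subgroup.
by exists y.
Qed.

Definition param_inv (y0 : T) (H : {ptws ZxZn N -> bool}) : T :=
  xget y0 (fun y => param y = H).

Lemma param_invK y0 : cancel (@param p') (param_inv y0).
Proof. by move=> y; apply: xget_unique => // y' /param_inj. Qed.

Lemma param_inv_continuous y0 :
  {within Chabauty (ZxZn N), continuous (param_inv y0)}.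
Proof.
rewrite -range_param; apply: compact_cancel_continuous.
- exact: param_continuous.
- exact: param_invK.
- exact: compact_Nbar_Kset.
- by apply: hausdorff_product => _; exact: discrete_hausdorff.
Qed.

Lemma limit_point_param y :
  limit_point (Chabauty (ZxZn N)) (param y) <-> y.1 = None.
Proof.
rewrite -range_param -limit_point_NbarE; apply: limit_point_range.
- exact: param_continuous.
- exact: param_invK y.
- by rewrite range_param; exact: param_inv_continuous.
Qed.

End ParamTopology.

Unset Implicit Arguments.
Set Strict Implicit.

Theorem corollary1 (n : nat) (hn : (1 <= n)%N) :
  @homeomorphic_to _ (Nbar * Kset (ndiv n))%type (Chabauty (ZxZn n)) /\
  Chabauty (ZxZn n) `&` limit_point (Chabauty (ZxZn n)) =
    [set H | exists m : nat, [/\ (0 < m)%N, (m %| n)%N & H = zero_times_cyc n m]].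
Proof.
case: n hn => // p' _.
have [i1 _] := divisor_atP (dvd1n p'.+1).
split.
  exists (param_inv (None, i1)), (@param p'); split.
  - exact: param_inv_continuous.
  - exact: param_continuous.
  - by move=> H /param_surj[y <-]; rewrite param_invK.
  - by move=> y; rewrite param_invK; split; [exact: param_subgroup|].
apply/seteqP; split=> [H [/param_surj[[oy i] <-]] | _ [m [m_gt0 mN ->]]].
  case: oy => [j /limit_point_param // | _].
  by exists (divisor_at i); rewrite param_None divisor_at_gt0 divisor_at_dvd.
have [i <-] := divisor_atP mN; rewrite -param_None.
by split; [exact: param_subgroup | exact/limit_point_param].
Qed.
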